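(* Let $K\subset Y$ and $K_h\subset Y_h$ be non-empty, convex and closed sets, where $Y_h\subset Y$ is a finite-dimensional subspace (not necessarily $K_h\subset K$). Let $\overline{y}\in H_Y$, $\varrho>0$, let $y_\varrho\in K$ solve $\langle y_\varrho,y-y_\varrho\rangle_{H_Y}+\varrho\langle Dy_\varrho,y-y_\varrho\rangle_{Y^*,Y}\ge\langle\overline{y},y-y_\varrho\rangle_{H_Y}$ for all $y\in K$, and let $y_{\varrho h}\in K_h$ solve $\langle y_{\varrho h},y_h-y_{\varrho h}\rangle_{H_Y}+\varrho\langle Dy_{\varrho h},y_h-y_{\varrho h}\rangle_{Y^*,Y}\ge\langle\overline{y},y_h-y_{\varrho h}\rangle_{H_Y}$ for all $y_h\in K_h$. Assume $\varrho Dy_\varrho+y_\varrho-\overline{y}\in H_Y$. Then $$\|y_\varrho-y_{\varrho h}\|_{H_Y}^2+2\varrho\|y_\varrho-y_{\varrho h}\|_D^2\le 2\inf_{y_h\in K_h}\Big[3\|y_\varrho-y_h\|_{H_Y}^2+\varrho\|y_\varrho-y_h\|_D^2\Big]+4\|\varrho Dy_\varrho+y_\varrho-\overline{y}\|_{H_Y}^2.$$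
   Context: Abstract setting: Let $Y\subset H_Y\subset Y^*$ be a Gelfand triple of real Hilbert spaces, with duality pairing $\langle\cdot,\cdot\rangle_{Y^*,Y}$ extending the inner product of $H_Y$. Let $D:Y\to Y^*$ be bounded, linear, self-adjoint and elliptic, $\|y\|_D:=\langle Dy,y\rangle_{Y^*,Y}^{1/2}$ (an equivalent norm on $Y$). An element $g\in Y^*$ is said to belong to $H_Y$ if there is $w\in H_Y$ with $\langle g,v\rangle_{Y^*,Y}=\langle w,v\rangle_{H_Y}$ for all $v\in Y$, and then $\|g\|_{H_Y}:=\|w\|_{H_Y}$. *)

From HB Require Import structures.
From mathcomp Require Import all_boot all_order all_algebra.
From mathcomp Require Import classical_sets boolp reals.
Set Implicit Arguments. Unset Strict Implicit. Unset Printing Implicit Defensive.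
Import Order.TTheory GRing.Theory Num.Theory.
Local Open Scope ring_scope.
Local Open Scope classical_set_scope.

Section Defs.
Variable R : realType.

Record inner_product (V : lmodType R) (ip : V -> V -> R) : Prop := {
  ip_sym : forall x y, ip x y = ip y x;
  ip_linear : forall (a : R) x y z, ip (a *: x + y) z = a * ip x z + ip y z;
  ip_ge0 : forall x, 0 <= ip x x;
  ip_def : forall x, ip x x = 0 -> x = 0 }.

Definition ipnorm (V : lmodType R) (ip : V -> V -> R) (x : V) : R :=
  Num.sqrt (ip x x).

Definition ip_complete (V : lmodType R) (ip : V -> V -> R) : Prop :=
  forall u : nat -> V,
    (forall e : R, 0 < e -> exists N : nat, forall m n : nat,
        (N <= m)%N -> (N <= n)%N -> ipnorm ip (u m - u n) < e) ->
    exists l : V, forall e : R, 0 < e -> exists N : nat, forall n : nat,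
        (N <= n)%N -> ipnorm ip (u n - l) < e.

Definition hilbert (V : lmodType R) (ip : V -> V -> R) : Prop :=
  inner_product ip /\ ip_complete ip.

(* Gelfand triple Y ⊂ H ⊂ Y^*: Y, H Hilbert spaces, iota : Y -> H a
   continuous, injective, linear embedding with dense range.  The dual
   pairing <g, v>_{Y*,Y} for g in H is (g, iota v)_H. *)
Definition gelfand_triple (Y H : lmodType R) (ipY : Y -> Y -> R)
    (ipH : H -> H -> R) (iota : Y -> H) : Prop :=
  [/\ hilbert ipY /\ hilbert ipH,
      (forall (a : R) x y, iota (a *: x + y) = a *: iota x + iota y),
      injective iota,
      (exists C : R, forall y, ipnorm ipH (iota y) <= C * ipnorm ipY y) &
      (forall (h : H) (e : R), 0 < e -> exists y : Y, ipnorm ipH (iota y - h) < e)].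

(* D : Y -> Y^* encoded by its pairing D y v = <D y, v>_{Y*,Y}:
   bounded, linear, self-adjoint and elliptic. *)
Definition elliptic_op (Y : lmodType R) (ipY : Y -> Y -> R) (D : Y -> Y -> R) : Prop :=
  [/\ (forall (a : R) x y v, D (a *: x + y) v = a * D x v + D y v),
      (forall (a : R) y v w, D y (a *: v + w) = a * D y v + D y w),
      (forall y v, D y v = D v y),
      (exists C : R, forall y v, `|D y v| <= C * ipnorm ipY y * ipnorm ipY v) &
      (exists c : R, 0 < c /\ forall y, c * ipY y y <= D y y)].

Definition Dnorm (Y : lmodType R) (D : Y -> Y -> R) (y : Y) : R := Num.sqrt (D y y).

Definition convex_set (V : lmodType R) (A : set V) : Prop :=
  forall x y (t : R), A x -> A y -> 0 <= t <= 1 -> A (t *: x + (1 - t) *: y).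

Definition ip_closed (V : lmodType R) (ip : V -> V -> R) (A : set V) : Prop :=
  forall x, (forall e : R, 0 < e -> exists2 a, A a & ipnorm ip (x - a) < e) -> A x.

Definition fin_dim_subspace (V : lmodType R) (S : set V) : Prop :=
  exists (n : nat) (b : 'I_n -> V),
    S = [set y | exists c : 'I_n -> R, y = \sum_(i < n) c i *: b i].

End Defs.

(* Subtracting the discrete variational inequality, tested with an arbitrary
   [yh] in [Kh], from the identity defining the residual [w] (tested with
   [yh - yrh]) yields, for [e := yr - yrh] and [f := yr - yh],
   [|e|^2 + rho |e|_D^2 <= (e, f) + rho <D e, f> + (w, e) - (w, f)].
   Young's inequality for the two symmetric forms absorbs the right-hand side,
   and taking the infimum over [yh] gives the estimate. *)
From HB Require Import structures.
From mathcomp Require Import all_boot all_order all_algebra.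
From mathcomp Require Import classical_sets boolp reals.
From mathcomp Require Import lra.
Set Implicit Arguments. Unset Strict Implicit. Unset Printing Implicit Defensive.
Import Order.TTheory GRing.Theory Num.Theory.
Local Open Scope ring_scope.
Local Open Scope classical_set_scope.

Section SymmetricForm.
Variables (R : realType) (V : lmodType R) (B : V -> V -> R).
Hypothesis B_linear : forall (a : R) x y z, B (a *: x + y) z = a * B x z + B y z.
Hypothesis B_sym : forall x y, B x y = B y x.

Lemma form0l z : B 0 z = 0.
Proof.
have := B_linear 1 0 0 z; rewrite scale1r addr0 mul1r => h.
by apply/eqP; rewrite -(subrr (B 0 z)) {2}h addrK.
Qed.

Lemma formDl x y z : B (x + y) z = B x z + B y z.
Proof. by have := B_linear 1 x y z; rewrite scale1r mul1r. Qed.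

Lemma formZl a x z : B (a *: x) z = a * B x z.
Proof. by rewrite -(addr0 (a *: x)) B_linear form0l addr0. Qed.

Lemma formNl x z : B (- x) z = - B x z.
Proof. by rewrite -scaleN1r formZl mulN1r. Qed.

Lemma formBl x y z : B (x - y) z = B x z - B y z.
Proof. by rewrite formDl formNl. Qed.

Lemma formDr x y z : B z (x + y) = B z x + B z y.
Proof. by rewrite B_sym formDl !(B_sym z). Qed.

Lemma formZr a x z : B z (a *: x) = a * B z x.
Proof. by rewrite B_sym formZl (B_sym z). Qed.

Lemma formNr x z : B z (- x) = - B z x.
Proof. by rewrite B_sym formNl (B_sym z). Qed.

Lemma formBr x y z : B z (x - y) = B z x - B z y.
Proof. by rewrite formDr formNr. Qed.

Hypothesis B_ge0 : forall x, 0 <= B x x.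

Lemma form_mixed_le x y : 2 * B x y <= B x x + B y y.
Proof. by have := B_ge0 (x - y); rewrite !(formBl, formBr) (B_sym y x); lra. Qed.

(* Expand [0 <= B u u] for [u = e - 2/3 f - 2/3 w] and [u = f + 1/7 w]. *)
Lemma form_cross_le e f w :
  4 * (B e f + B w e - B w f) <= 3 * B e e + 6 * B f f + 4 * B w w.
Proof.
have := B_ge0 (e - (2/3) *: f - (2/3) *: w).
have := B_ge0 (f + (1/7) *: w).
have := B_ge0 w.
rewrite !(formDl, formDr, formNl, formNr, formZl, formZr).
have := B_sym e f; have := B_sym e w; have := B_sym f w; lra.
Qed.

End SymmetricForm.

Lemma ipnorm_sqr (R : realType) (V : lmodType R) (ip : V -> V -> R) x :
  inner_product ip -> ipnorm ip x ^+ 2 = ip x x.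
Proof. by move=> hip; rewrite /ipnorm sqr_sqrtr // (ip_ge0 hip). Qed.

Lemma Dnorm_sqr (R : realType) (Y : lmodType R) (D : Y -> Y -> R) y :
  0 <= D y y -> Dnorm D y ^+ 2 = D y y.
Proof. by move=> hy; rewrite /Dnorm sqr_sqrtr. Qed.

Section GalerkinError.
Variables (R : realType) (Y H : lmodType R).
Variables (ipH : H -> H -> R) (iota : Y -> H) (D : Y -> Y -> R).
Hypothesis hH : inner_product ipH.
Hypothesis iota_linear : forall (a : R) x y, iota (a *: x + y) = a *: iota x + iota y.
Hypothesis D_linear : forall (a : R) x y v, D (a *: x + y) v = a * D x v + D y v.
Hypothesis D_sym : forall y v, D y v = D v y.
Hypothesis D_ge0 : forall y, 0 <= D y y.

Variables (Kh : set Y) (ybar w : H) (rho : R) (yr yrh : Y).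
Hypothesis rho_gt0 : 0 < rho.
Hypothesis hVIh : forall yh, Kh yh ->
  ipH (iota yrh) (iota (yh - yrh)) + rho * D yrh (yh - yrh)
    >= ipH ybar (iota (yh - yrh)).
Hypothesis hw : forall v : Y,
  rho * D yr v + ipH (iota yr) (iota v) - ipH ybar (iota v) = ipH w (iota v).

Let ipHBl := formBl (ip_linear hH).
Let ipHBr := formBr (ip_linear hH) (ip_sym hH).
Let DBl := formBl D_linear.
Let DBr := formBr D_linear D_sym.

Lemma iotaB x y : iota (x - y) = iota x - iota y.
Proof. by rewrite addrC -scaleN1r iota_linear scaleN1r addrC. Qed.

Lemma galerkin_error_ineq yh : Kh yh ->
  ipH (iota (yr - yrh)) (iota (yr - yrh)) + rho * D (yr - yrh) (yr - yrh)
  <= ipH (iota (yr - yrh)) (iota (yr - yh)) + rho * D (yr - yrh) (yr - yh)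
     + ipH w (iota (yr - yrh)) - ipH w (iota (yr - yh)).
Proof.
move=> hyh.
have hv : yh - yrh = (yr - yrh) - (yr - yh).
  by rewrite opprB [RHS]addrC addrA subrK.
have := hVIh hyh; have := hw (yh - yrh).
rewrite hv !iotaB !(ipHBl, ipHBr, DBl, DBr) !mulrBr; lra.
Qed.

Lemma galerkin_error_bound yh : Kh yh ->
  ipnorm ipH (iota (yr - yrh)) ^+ 2 + 2 * rho * Dnorm D (yr - yrh) ^+ 2
  <= 2 * (3 * ipnorm ipH (iota (yr - yh)) ^+ 2 + rho * Dnorm D (yr - yh) ^+ 2)
     + 4 * ipnorm ipH w ^+ 2.
Proof.
move=> hyh; rewrite !(ipnorm_sqr _ hH) !Dnorm_sqr //.
have := galerkin_error_ineq hyh.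
have := ler_wpM2l (ltW rho_gt0)
  (form_mixed_le D_linear D_sym D_ge0 (yr - yrh) (yr - yh)).
have := form_cross_le (ip_linear hH) (ip_sym hH) (ip_ge0 hH)
  (iota (yr - yrh)) (iota (yr - yh)) w.
rewrite -mulrA; lra.
Qed.

End GalerkinError.

Theorem mainTheorem9 (R : realType) (Y H : lmodType R)
  (ipY : Y -> Y -> R) (ipH : H -> H -> R) (iota : Y -> H) (D : Y -> Y -> R)
  (hG : gelfand_triple ipY ipH iota) (hD : elliptic_op ipY D)
  (K Kh Yh : set Y)
  (hK0 : K !=set0) (hKc : convex_set K) (hKcl : ip_closed ipY K)
  (hYh : fin_dim_subspace Yh) (hKhYh : Kh `<=` Yh)
  (hKh0 : Kh !=set0) (hKhc : convex_set Kh) (hKhcl : ip_closed ipY Kh)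
  (ybar : H) (rho : R) (hrho : 0 < rho)
  (yr yrh : Y) (hyrK : K yr) (hyrhK : Kh yrh)
  (hVI : forall y, K y ->
     ipH (iota yr) (iota (y - yr)) + rho * D yr (y - yr)
       >= ipH ybar (iota (y - yr)))
  (hVIh : forall yh, Kh yh ->
     ipH (iota yrh) (iota (yh - yrh)) + rho * D yrh (yh - yrh)
       >= ipH ybar (iota (yh - yrh)))
  (w : H)
  (hw : forall v : Y,
     rho * D yr v + ipH (iota yr) (iota v) - ipH ybar (iota v) = ipH w (iota v)) :
  ipnorm ipH (iota (yr - yrh)) ^+ 2 + 2 * rho * Dnorm D (yr - yrh) ^+ 2
  <= 2 * inf [set 3 * ipnorm ipH (iota (yr - yh)) ^+ 2 + rho * Dnorm D (yr - yh) ^+ 2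
              | yh in Kh]
     + 4 * ipnorm ipH w ^+ 2.
Proof.
case: hG => [[[hY _] [hH _]] iota_linear _ _ _].
case: hD => [D_linear _ D_sym _ [c [c_gt0 D_coercive]]].
have D_ge0 y : 0 <= D y y.
  exact: le_trans (mulr_ge0 (ltW c_gt0) (ip_ge0 hY y)) (D_coercive y).
have bound := galerkin_error_bound hH iota_linear D_linear D_sym D_ge0 hrho hVIh hw.
suff : (ipnorm ipH (iota (yr - yrh)) ^+ 2 + 2 * rho * Dnorm D (yr - yrh) ^+ 2
        - 4 * ipnorm ipH w ^+ 2) / 2
    <= inf [set 3 * ipnorm ipH (iota (yr - yh)) ^+ 2 + rho * Dnorm D (yr - yh) ^+ 2
           | yh in Kh] by lra.
apply: lb_le_inf => [|_ [yh hyh <-]].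
  by case: hKh0 => y hy; eexists; exists y.
by rewrite ler_pdivrMr //; have := bound yh hyh; lra.
Qed.
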